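(* Let $\mathcal{M}=(\mathcal{S},\mathcal{A},\mathcal{P},r,\gamma)$ be a finite MDP with $|\mathcal{S}|=S$, $|\mathcal{A}|=A$, $\gamma\in[0,1)$. Let $\mathcal{F}=\mathbb{R}^{SA}$, let $\|\cdot\|$ be a strictly monotone norm on $\mathbb{R}^{SA}$ (i.e. $Q\geq Q'\geq0$ and $Q\ne Q'$ imply $\|Q\|>\|Q'\|$), let $\mu_0$ be a stationary policy and $f_0\in\mathbb{R}^{SA}$ with $T_{\mu_0}f_0\geq f_0$. Let $(f_k)$, $(\mu_k)$ be generated by Reliable Policy Iteration: for $k=0,1,2,\dots$, $$f_{k+1}\in\arg\max_{f\in\mathcal{F}}\ \|f-f_k\|\quad\text{subject to}\quad T_{\mu_k} f\geq f\geq f_k,$$ and $\mu_{k+1}$ is a deterministic policy greedy with respect to $f_{k+1}$. Then $f_{k+1}=Q_{\mu_k}$ for all $k\ge0$, $f_\infty:=\lim_{k\to\infty}f_k=Q_*$, and any deterministic policy $\mu_\infty$ greedy with respect to $f_\infty$ is optimal.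
   Context: Functions $\mathcal{S}\times\mathcal{A}\to\mathbb{R}$ are identified with vectors in $\mathbb{R}^{SA}$. A stationary policy is a map $\mu:\mathcal{S}\to\Delta(\mathcal{A})$; its Q-value function is $Q_\mu(s,a)=\mathbb{E}[\sum_{t\ge0}\gamma^t r(s_t,a_t)\mid s_0=s,a_0=a]$ with $s_{t+1}\sim\mathcal{P}(\cdot|s_t,a_t)$, $a_{t+1}\sim\mu(\cdot|s_{t+1})$. The Bellman operator is $T_\mu Q(s,a)=r(s,a)+\gamma\sum_{s',a'}\mathcal{P}(s'|s,a)\mu(a'|s')Q(s',a')$. $Q_*$ is the optimal Q-value function. A deterministic policy $\mu$ is greedy with respect to $f$ if $\mu(s)\in\arg\max_a f(s,a)$ for all $s$. Vector inequalities are coordinate-wise. *)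

From HB Require Import structures.
From mathcomp Require Import all_boot all_order all_algebra.
From mathcomp Require Import all_classical all_reals all_analysis.
Set Implicit Arguments. Unset Strict Implicit. Unset Printing Implicit Defensive.
Import Order.TTheory GRing.Theory Num.Theory.
Import numFieldNormedType.Exports.
Local Open Scope ring_scope.
Local Open Scope classical_set_scope.

Section MDP.
Variables (R : realType) (S A : finType).

Definition qfun := S -> A -> R.

Definition qadd (f g : qfun) : qfun := fun s a => f s a + g s a.
Definition qsub (f g : qfun) : qfun := fun s a => f s a - g s a.
Definition qscale (c : R) (f : qfun) : qfun := fun s a => c * f s a.
Definition qzero : qfun := fun _ _ => 0.
Definition qle (f g : qfun) : Prop := forall s a, f s a <= g s a.

(* A finite MDP: transition kernel P(s'|s,a) = P s a s', reward r, discount gamma *)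
Definition is_mdp (P : S -> A -> S -> R) (gamma : R) : Prop :=
  (forall s a s', 0 <= P s a s') /\ (forall s a, \sum_(s' : S) P s a s' = 1) /\
  0 <= gamma /\ gamma < 1.

(* stationary (randomized) policy: mu s a = mu(a|s) *)
Definition is_policy (mu : S -> A -> R) : Prop :=
  forall s, (forall a, 0 <= mu s a) /\ \sum_(a : A) mu s a = 1.

Definition detpol (d : S -> A) : S -> A -> R :=
  fun s a => if a == d s then 1 else 0.

Definition Pmu (P : S -> A -> S -> R) (mu : S -> A -> R) (g : qfun) : qfun :=
  fun s a => \sum_(s' : S) P s a s' * \sum_(a' : A) mu s' a' * g s' a'.

Definition Tmu (P : S -> A -> S -> R) (r : qfun) (gamma : R) (mu : S -> A -> R)
  (Q : qfun) : qfun :=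
  fun s a => r s a + gamma * Pmu P mu Q s a.

(* Q_mu(s,a) = E[sum_t gamma^t r(s_t,a_t) | s_0=s, a_0=a]
   = sum_t gamma^t (P_mu^t r)(s,a)   (E[r(s_t,a_t)] = (P_mu^t r)(s,a)). *)
Definition Qval (P : S -> A -> S -> R) (r : qfun) (gamma : R) (mu : S -> A -> R)
  : qfun :=
  fun s a => limn (fun n => \sum_(t < n) gamma ^+ t * iter t (Pmu P mu) r s a).

Definition Qstar (P : S -> A -> S -> R) (r : qfun) (gamma : R) : qfun :=
  fun s a => sup [set y | exists mu, is_policy mu /\ y = Qval P r gamma mu s a].

Definition greedy (d : S -> A) (f : qfun) : Prop :=
  forall s a, f s a <= f s (d s).

Definition optimal_policy (P : S -> A -> S -> R) (r : qfun) (gamma : R)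
  (mu : S -> A -> R) : Prop :=
  Qval P r gamma mu = Qstar P r gamma.

Definition is_norm (N : qfun -> R) : Prop :=
  (forall f g, N (qadd f g) <= N f + N g) /\
  (forall c f, N (qscale c f) = `|c| * N f) /\
  (forall f, N f = 0 -> f = qzero).

Definition strictly_monotone (N : qfun -> R) : Prop :=
  forall Q Q', qle Q' Q -> qle qzero Q' -> Q <> Q' -> N Q' < N Q.

End MDP.
Arguments detpol {R S A} d _ _.
Arguments qzero {R S A} _ _.

From HB Require Import structures.
From mathcomp Require Import all_boot all_order all_algebra.
From mathcomp Require Import all_classical all_reals all_analysis.
From mathcomp Require Import lra.
Import Order.TTheory GRing.Theory Num.Theory.
Import numFieldNormedType.Exports.

(* Q_mu is the greatest solution of g <= T_mu g, and a fixed point of T_mu.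
   Hence Q_{mu_k} is feasible for the k-th step and dominates every feasible f,
   so strict monotonicity of the norm forces f_{k+1} = Q_{mu_k}.  Greedy
   improvement makes (f_k) nondecreasing, and it is bounded, so it has a limit
   f_inf.  Passing to the limit, T_nu f_inf <= f_inf for every policy nu, whence
   Q_nu <= f_inf, while f_inf <= T_d f_inf for d greedy w.r.t. f_inf, whence
   f_inf <= Q_d.  Thus f_inf = Q_* = Q_d. *)

Set Implicit Arguments.
Unset Strict Implicit.
Unset Printing Implicit Defensive.
Local Open Scope ring_scope.
Local Open Scope classical_set_scope.

Section ConvexCombination.
Variables (R : realType) (I : finType) (w x : I -> R) (c : R).
Hypotheses (w_ge0 : forall i, 0 <= w i) (w_sum1 : \sum_i w i = 1).

Lemma convex_comb_le : (forall i, x i <= c) -> \sum_i w i * x i <= c.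
Proof.
move=> xc; rewrite -[c]mul1r -w_sum1 mulr_suml.
by apply: ler_sum => i _; apply: ler_wpM2l.
Qed.

Lemma convex_comb_ge : (forall i, c <= x i) -> c <= \sum_i w i * x i.
Proof.
move=> xc; rewrite -[c]mul1r -w_sum1 mulr_suml.
by apply: ler_sum => i _; apply: ler_wpM2l.
Qed.

End ConvexCombination.

Lemma qfun_bounded (R : realType) (S A : finType) (h : qfun R S A) :
  exists c, forall s a, `|h s a| <= c.
Proof.
exists (\sum_s \sum_a `|h s a|) => s a.
rewrite (bigD1 s) //= (bigD1 a) //= -addrA lerDl.
by rewrite addr_ge0 ?sumr_ge0 // => s' _; rewrite sumr_ge0.
Qed.

Lemma qle_anti (R : realType) (S A : finType) (g h : qfun R S A) :
  qle g h -> qle h g -> g = h.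
Proof.
move=> gh hg; apply/funext => s; apply/funext => a.
by apply: le_anti; rewrite gh hg.
Qed.

Lemma strictly_monotone_argmax_eq (R : realType) (S A : finType)
    (N : qfun R S A -> R) (h g Q : qfun R S A) :
  strictly_monotone N -> qle h g -> qle g Q ->
  N (qsub Q h) <= N (qsub g h) -> g = Q.
Proof.
move=> N_smono hg gQ; apply: contra_leP => gQ_neq.
apply: N_smono => [s a|s a|QhE]; rewrite /qsub /qzero.
- by rewrite lerD2r.
- by rewrite subr_ge0.
apply: gQ_neq; apply: qle_anti gQ _ => s a.
by have := congr1 (fun F => F s a + h s a) QhE; rewrite /= !subrK => ->.
Qed.

Lemma detpol_sum (R : realType) (S A : finType) (d : S -> A) (h : qfun R S A) s :
  \sum_a detpol d s a * h s a = h s (d s).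
Proof.
rewrite (bigD1 (d s)) //= /detpol eqxx mul1r big1 ?addr0 // => a /negbTE ->.
by rewrite mul0r.
Qed.

Lemma detpol_policy {R : realType} (S A : finType) (d : S -> A) :
  is_policy (R := R) (detpol d).
Proof.
move=> s; split=> [a|]; first by rewrite /detpol; case: eqP.
under eq_bigr do rewrite -[detpol d s _]mulr1.
exact: (detpol_sum d (fun _ _ => 1) s).
Qed.

Section MDP.
Variables (R : realType) (S A : finType) (P : S -> A -> S -> R).
Hypotheses (P_ge0 : forall s a s', 0 <= P s a s')
  (P_sum1 : forall s a, \sum_s' P s a s' = 1).

Lemma Pmu_le_cst mu h c : is_policy mu -> (forall s a, h s a <= c) ->
  forall s a, Pmu P mu h s a <= c.
Proof.
move=> mu_pol hc s a.
rewrite /Pmu; apply: (convex_comb_le (P_ge0 s a) (P_sum1 s a)) => s'.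
by have [mu_ge0 mu_sum1] := mu_pol s'; exact: convex_comb_le mu_ge0 mu_sum1 (hc s').
Qed.

Lemma Pmu_ge_cst mu h c : is_policy mu -> (forall s a, c <= h s a) ->
  forall s a, c <= Pmu P mu h s a.
Proof.
move=> mu_pol hc s a.
rewrite /Pmu; apply: (convex_comb_ge (P_ge0 s a) (P_sum1 s a)) => s'.
by have [mu_ge0 mu_sum1] := mu_pol s'; exact: convex_comb_ge mu_ge0 mu_sum1 (hc s').
Qed.

Lemma PmuB mu g h s a : Pmu P mu (qsub g h) s a = Pmu P mu g s a - Pmu P mu h s a.
Proof.
rewrite /Pmu -sumrB; apply: eq_bigr => s' _; rewrite -mulrBr -sumrB.
by congr (_ * _); apply: eq_bigr => a' _; rewrite mulrBr.
Qed.

Lemma PmuZ mu c h s a : Pmu P mu (qscale c h) s a = c * Pmu P mu h s a.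
Proof.
rewrite /Pmu mulr_sumr; apply: eq_bigr => s' _.
rewrite [RHS]mulrCA [in RHS]mulr_sumr; congr (_ * _); apply: eq_bigr => a' _.
by rewrite mulrCA.
Qed.

Lemma Pmu_sum mu n (F : nat -> qfun R S A) s a :
  Pmu P mu (fun s a => \sum_(t < n) F t s a) s a = \sum_(t < n) Pmu P mu (F t) s a.
Proof.
rewrite /Pmu exchange_big; apply: eq_bigr => s' _ /=.
rewrite -mulr_sumr exchange_big; congr (_ * _); apply: eq_bigr => a' _ /=.
by rewrite mulr_sumr.
Qed.

Lemma Pmu_le mu g h : is_policy mu -> qle g h -> qle (Pmu P mu g) (Pmu P mu h).
Proof.
move=> mu_pol gh s a; rewrite -subr_ge0 -PmuB.
by apply: Pmu_ge_cst => // s' a'; rewrite subr_ge0.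
Qed.

Lemma Pmu_le_greedy nu d h : is_policy nu -> greedy d h ->
  qle (Pmu P nu h) (Pmu P (detpol d) h).
Proof.
move=> nu_pol d_greedy s a; apply: ler_sum => s' _; rewrite detpol_sum.
apply: ler_wpM2l; first exact: P_ge0.
have [nu_ge0 nu_sum1] := nu_pol s'.
exact: convex_comb_le nu_ge0 nu_sum1 (d_greedy s').
Qed.

Lemma iter_Pmu_norm_le mu h c : is_policy mu -> (forall s a, `|h s a| <= c) ->
  forall n s a, `|iter n (Pmu P mu) h s a| <= c.
Proof.
move=> mu_pol hc; elim=> [|n IHn] s a /=; first exact: hc.
have IHn_bounds s' a' : - c <= iter n (Pmu P mu) h s' a' <= c by rewrite -ler_norml.
rewrite ler_norml; apply/andP; split; [apply: Pmu_ge_cst | apply: Pmu_le_cst] => //.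
- by move=> s' a'; case/andP: (IHn_bounds s' a').
- by move=> s' a'; case/andP: (IHn_bounds s' a').
Qed.

Variables (r : qfun R S A) (gamma : R).
Hypotheses (gamma_ge0 : 0 <= gamma) (gamma_lt1 : gamma < 1).

Local Notation T := (Tmu P r gamma).
Local Notation Q := (Qval P r gamma).

Lemma Tmu_le mu g h : is_policy mu -> qle g h -> qle (T mu g) (T mu h).
Proof. by move=> mu_pol gh s a; rewrite lerD2l ler_wpM2l // Pmu_le. Qed.

Lemma Tmu_le_greedy nu d h : is_policy nu -> greedy d h ->
  qle (T nu h) (T (detpol d) h).
Proof. by move=> nu_pol d_greedy s a; rewrite lerD2l ler_wpM2l // Pmu_le_greedy. Qed.

Lemma Tmu_sub_le mu g h c : is_policy mu -> (forall s a, g s a - h s a <= c) ->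
  forall s a, T mu g s a - T mu h s a <= gamma * c.
Proof.
move=> mu_pol ghc s a; rewrite /Tmu opprD addrACA subrr add0r -mulrBr -PmuB.
by rewrite ler_wpM2l // Pmu_le_cst.
Qed.

Lemma Tmu_cvg mu (g : nat -> qfun R S A) h :
  (forall s a, g n s a @[n --> \oo] --> h s a) ->
  forall s a, T mu (g n) s a @[n --> \oo] --> T mu h s a.
Proof.
move=> g_cvg s a; apply: cvgD; first exact: cvg_cst.
apply: cvgMl_tmp; apply: cvg_big => [|s' _]; first exact: add_continuous.
apply: cvgMl_tmp; apply: cvg_big => [|a' _]; first exact: add_continuous.
by apply: cvgMl_tmp; apply: g_cvg.
Qed.

Definition Qpartial mu n : qfun R S A :=
  fun s a => \sum_(t < n) gamma ^+ t * iter t (Pmu P mu) r s a.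

Lemma Qpartial0 mu s a : Qpartial mu 0 s a = 0.
Proof. by rewrite /Qpartial big_ord0. Qed.

Lemma QpartialS mu n s a : Qpartial mu n.+1 s a = T mu (Qpartial mu n) s a.
Proof.
rewrite /Qpartial /Tmu big_ord_recl /= expr0 mul1r; congr (_ + _).
rewrite (Pmu_sum _ _ (fun t s a => gamma ^+ t * iter t (Pmu P mu) r s a)).
rewrite mulr_sumr; apply: eq_bigr => t _.
by rewrite (PmuZ _ (gamma ^+ t)) exprS mulrA.
Qed.

Lemma Qpartial_cvg mu s a : is_policy mu ->
  Qpartial mu n s a @[n --> \oo] --> Q mu s a.
Proof.
move=> mu_pol; pose u t := gamma ^+ t * iter t (Pmu P mu) r s a.
have Qpartial_series : (fun n => Qpartial mu n s a) = series u.
  by apply/funext => n; rewrite /series /= big_mkord.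
have [c rc] := qfun_bounded r.
have c_ge0 : 0 <= c := le_trans (normr_ge0 _) (rc s a).
have : cvgn (series u).
  apply: normed_cvg.
  apply: (@series_le_cvg R (fun n => `|u n|) (geometric c gamma)) => [n|n|n|].
  - exact: normr_ge0.
  - by rewrite /geometric mulr_ge0 // exprn_ge0.
  - rewrite /geometric normrM ger0_norm ?exprn_ge0 // mulrC ler_wpM2r ?exprn_ge0 //.
    exact: iter_Pmu_norm_le.
  - by apply: is_cvg_geometric_series; rewrite ger0_norm.
by rewrite -Qpartial_series.
Qed.

Lemma Qval_fix mu : is_policy mu -> T mu (Q mu) = Q mu.
Proof.
move=> mu_pol; apply/funext => s; apply/funext => a.
have QpartialS_cvg : Qpartial mu n.+1 s a @[n --> \oo] --> Q mu s a.
  by rewrite (cvg_shiftS (fun n => Qpartial mu n s a)); exact: Qpartial_cvg.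
have QpartialS_cvgT : Qpartial mu n.+1 s a @[n --> \oo] --> T mu (Q mu) s a.
  under eq_fun do rewrite QpartialS.
  by apply: Tmu_cvg => s' a'; exact: Qpartial_cvg.
exact: cvg_unique QpartialS_cvgT QpartialS_cvg.
Qed.

Lemma Qval_ge mu g : is_policy mu -> qle g (T mu g) -> qle g (Q mu).
Proof.
move=> mu_pol g_sub; have [c gc] := qfun_bounded g.
have gap n s a : g s a - Qpartial mu n s a <= geometric c gamma n.
  elim: n s a => [|n IHn] s a.
    by rewrite Qpartial0 subr0 /= expr0 mulr1; exact: le_trans (ler_norm _) (gc s a).
  rewrite QpartialS /= exprS mulrCA; apply: le_trans (Tmu_sub_le mu_pol IHn s a).
  by rewrite lerD2r g_sub.
move=> s a; apply: (@ler_cvg_to _ \oo _ _ (fun=> g s a)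
  (fun n => Qpartial mu n s a + geometric c gamma n)).
- exact: cvg_cst.
- rewrite -[X in _ --> X]addr0; apply: cvgD; first exact: Qpartial_cvg.
  by apply: cvg_geometric; rewrite ger0_norm.
- by apply: nearW => n; rewrite -lerBlDl gap.
Qed.

Lemma Qval_le mu g : is_policy mu -> qle (T mu g) g -> qle (Q mu) g.
Proof.
move=> mu_pol g_super; have [c gc] := qfun_bounded g.
have gap n s a : Qpartial mu n s a - g s a <= geometric c gamma n.
  elim: n s a => [|n IHn] s a.
    by rewrite Qpartial0 sub0r /= expr0 mulr1 lerNl; exact: lerNnormlW (gc s a).
  rewrite QpartialS /= exprS mulrCA; apply: le_trans (Tmu_sub_le mu_pol IHn s a).
  by rewrite lerD2l lerN2 g_super.
move=> s a; apply: (@ler_cvg_to _ \oo _ _ (fun n => Qpartial mu n s a)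
  (fun n => g s a + geometric c gamma n)).
- exact: Qpartial_cvg.
- rewrite -[X in _ --> X]addr0; apply: cvgD; first exact: cvg_cst.
  by apply: cvg_geometric; rewrite ger0_norm.
- by apply: nearW => n; rewrite -lerBlDl gap.
Qed.

Lemma Qval_le_cst mu c : is_policy mu -> (forall s a, r s a <= c * (1 - gamma)) ->
  qle (Q mu) (fun _ _ => c).
Proof.
move=> mu_pol rc; apply: Qval_le => // s a; rewrite /Tmu.
have Pc : gamma * Pmu P mu (fun _ _ => c) s a <= gamma * c.
  by rewrite ler_wpM2l // (Pmu_le_cst mu_pol (fun _ _ => lexx c)).
have := rc s a; lra.
Qed.

Section ReliablePolicyIteration.
Variables (N : qfun R S A -> R) (f : nat -> qfun R S A) (mu : nat -> S -> A -> R).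
Hypotheses (N_smono : strictly_monotone N) (mu0_policy : is_policy (mu 0%N))
  (f0_sub : qle (f 0%N) (T (mu 0%N) (f 0%N)))
  (f_argmax : forall k,
     qle (f k.+1) (T (mu k) (f k.+1)) /\ qle (f k) (f k.+1) /\
     (forall g, qle g (T (mu k) g) -> qle (f k) g ->
        N (qsub g (f k)) <= N (qsub (f k.+1) (f k))))
  (mu_greedy : forall k, exists d : S -> A, greedy d (f k.+1) /\ mu k.+1 = detpol d).

Lemma mu_policy k : is_policy (mu k).
Proof. by case: k => [|k] //; have [d [_ ->]] := mu_greedy k; exact: detpol_policy. Qed.

Lemma f_sub k : qle (f k) (T (mu k) (f k)).
Proof.
case: k => [//|k] s a; have [d [d_greedy ->]] := mu_greedy k.
exact: le_trans ((f_argmax k).1 s a) (Tmu_le_greedy (mu_policy k) d_greedy s a).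
Qed.

Lemma f_eq_Qval k : f k.+1 = Q (mu k).
Proof.
have [fS_sub [f_le f_max]] := f_argmax k.
have Q_sub : qle (Q (mu k)) (T (mu k) (Q (mu k))).
  by move=> s a; rewrite Qval_fix //; exact: mu_policy.
apply: (strictly_monotone_argmax_eq N_smono f_le (Qval_ge (mu_policy k) fS_sub)).
exact: f_max Q_sub (Qval_ge (mu_policy k) (f_sub k)).
Qed.

Lemma f_fix k : T (mu k) (f k.+1) = f k.+1.
Proof. by rewrite f_eq_Qval Qval_fix //; exact: mu_policy. Qed.

Lemma f_bounded : exists c, forall k, qle (f k) (fun _ _ => c).
Proof.
have [c rc] := qfun_bounded r.
have fS_le k : qle (f k.+1) (fun _ _ => c / (1 - gamma)).
  rewrite f_eq_Qval; apply: Qval_le_cst (mu_policy k) _ => s a.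
  rewrite divfK; first exact: le_trans (ler_norm _) (rc s a).
  by rewrite subr_eq0 eq_sym lt_eqF.
exists (c / (1 - gamma)); case=> [|k] s a; last exact: fS_le.
exact: le_trans ((f_argmax 0).2.1 s a) (fS_le 0%N s a).
Qed.

Lemma f_nondecreasing s a : nondecreasing_seq (fun k => f k s a).
Proof. by apply/nondecreasing_seqP => k; exact: (f_argmax k).2.1. Qed.

Definition f_lim : qfun R S A := fun s a => limn (fun k => f k s a).

Lemma f_cvg s a : f k s a @[k --> \oo] --> f_lim s a.
Proof.
have [c fc] := f_bounded.
apply: nondecreasing_is_cvgn (f_nondecreasing s a) _.
by exists c => _ [k _ <-]; exact: fc.
Qed.

Lemma fS_cvg s a : f k.+1 s a @[k --> \oo] --> f_lim s a.
Proof. by rewrite (cvg_shiftS (fun k => f k s a)); exact: f_cvg. Qed.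

Lemma f_le_lim k : qle (f k) f_lim.
Proof.
move=> s a; rewrite /f_lim.
exact: nondecreasing_cvgn_le (f_nondecreasing s a) (cvgP _ (@f_cvg s a)) k.
Qed.

Lemma f_lim_super nu : is_policy nu -> qle (T nu f_lim) f_lim.
Proof.
move=> nu_pol s a.
apply: (@ler_cvg_to _ \oo _ _ (fun k => T nu (f k.+1) s a) (fun=> f_lim s a)).
- exact: Tmu_cvg fS_cvg s a.
- exact: cvg_cst.
apply: nearW => k; have [d [d_greedy mu_d]] := mu_greedy k.
apply: le_trans (Tmu_le_greedy nu_pol d_greedy s a) _; rewrite -mu_d.
apply: le_trans (f_le_lim k.+2 s a); rewrite -(f_fix k.+1).
exact: Tmu_le (mu_policy _) (f_argmax _).2.1 s a.
Qed.

Lemma f_lim_sub d : greedy d f_lim -> qle f_lim (T (detpol d) f_lim).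
Proof.
move=> d_greedy s a.
apply: (@ler_cvg_to _ \oo _ _ (fun k => f k.+1 s a) (fun=> T (detpol d) f_lim s a)).
- exact: fS_cvg.
- exact: cvg_cst.
apply: nearW => k; rewrite -(f_fix k).
exact: le_trans (Tmu_le (mu_policy k) (f_le_lim _) s a)
  (Tmu_le_greedy (mu_policy k) d_greedy s a).
Qed.

Lemma Qstar_eq_f_lim : Qstar P r gamma = f_lim.
Proof.
apply/funext => s; apply/funext => a; rewrite /Qstar; set E := [set y | _].
have E_ub : ubound E (f_lim s a).
  by move=> _ [nu [nu_pol ->]]; exact: Qval_le nu_pol (f_lim_super nu_pol) s a.
apply: le_anti; apply/andP; split.
  by apply: ge_sup E_ub; exists (Q (mu 0%N) s a), (mu 0%N).
apply: (@ler_cvg_to _ \oo _ _ (fun k => f k.+1 s a) (fun=> sup E)).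
- exact: fS_cvg.
- exact: cvg_cst.
apply: nearW => k; apply: ub_le_sup; first by exists (f_lim s a).
by exists (mu k); rewrite f_eq_Qval; split; [exact: mu_policy|].
Qed.

Lemma greedy_f_lim_optimal d : greedy d f_lim -> optimal_policy P r gamma (detpol d).
Proof.
move=> d_greedy; rewrite /optimal_policy Qstar_eq_f_lim.
apply: qle_anti.
- exact: Qval_le (detpol_policy d) (f_lim_super (detpol_policy d)).
- exact: Qval_ge (detpol_policy d) (f_lim_sub d_greedy).
Qed.

End ReliablePolicyIteration.

End MDP.

Theorem theorem2 (R : realType) (S A : finType)
  (P : S -> A -> S -> R) (r : qfun R S A) (gamma : R)
  (N : qfun R S A -> R)
  (f : nat -> qfun R S A) (mu : nat -> S -> A -> R) :
  is_mdp P gamma ->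
  is_norm N -> strictly_monotone N ->
  is_policy (mu 0%N) ->
  qle (f 0%N) (Tmu P r gamma (mu 0%N) (f 0%N)) ->
  (* f_{k+1} in argmax_f ||f - f_k|| s.t. T_{mu_k} f >= f >= f_k *)
  (forall k,
     qle (f k.+1) (Tmu P r gamma (mu k) (f k.+1)) /\ qle (f k) (f k.+1) /\
     (forall g, qle g (Tmu P r gamma (mu k) g) -> qle (f k) g ->
        N (qsub g (f k)) <= N (qsub (f k.+1) (f k)))) ->
  (* mu_{k+1} deterministic and greedy w.r.t. f_{k+1} *)
  (forall k, exists d : S -> A, greedy d (f k.+1) /\ mu k.+1 = detpol d) ->
  (forall k, f k.+1 = Qval P r gamma (mu k)) /\
  (forall s a, f k s a @[k --> \oo] --> Qstar P r gamma s a) /\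
  (forall d : S -> A, greedy d (fun s a => limn (fun k => f k s a)) ->
     optimal_policy P r gamma (detpol d)).
Proof.
move=> [P_ge0 [P_sum1 [gamma_ge0 gamma_lt1]]] _ N_smono mu0_policy f0_sub f_argmax
  mu_greedy.
split; first exact: (f_eq_Qval _ _ _ _ N_smono _ f0_sub).
split; last exact: (greedy_f_lim_optimal _ _ _ _ N_smono _ f0_sub).
move=> s a; rewrite (Qstar_eq_f_lim _ _ _ _ N_smono _ f0_sub) //.
exact: (f_cvg _ _ _ _ N_smono _ f0_sub).
Qed.
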